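(* Let $X$ be a real normed linear space and $x\in X\setminus\{\theta\}$. Let $y_1,y_2\in X\setminus\{\theta\}$ satisfy $x\perp_B^\varepsilon y_1$ and $x\perp_B^\varepsilon y_2$, where $\varepsilon\in[0,1)$ is such that $$0\le\varepsilon<\frac{2\|y_1+y_2\|}{3(\|y_1\|+\|y_2\|)}<1.$$ If $x$ is $\varepsilon$-smooth, then there exists $\varepsilon_1\in[0,1)$ such that $x\perp_B^{\varepsilon_1}(y_1+y_2)$.
   Context: For $\delta\in[0,1)$, $x\perp_B^\delta y$ (approximate Birkhoff–James orthogonality) means $\|x+\lambda y\|^2\ge\|x\|^2-2\delta\|x\|\|\lambda y\|$ for all $\lambda\in\mathbb{R}$. For $x\neq\theta$, $J(x)=\{f\in S_{X^*}:f(x)=\|x\|\}$, and $x$ is $\varepsilon$-smooth if $\sup_{f,g\in J(x)}\|f-g\|\le\varepsilon$. *)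

From HB Require Import structures.
From mathcomp Require Import all_boot all_order all_algebra.
From mathcomp Require Import all_classical all_reals all_analysis.
Set Implicit Arguments. Unset Strict Implicit. Unset Printing Implicit Defensive.
Import Order.TTheory GRing.Theory Num.Theory.
Import numFieldNormedType.Exports.
Local Open Scope classical_set_scope.
Local Open Scope ring_scope.

Definition bj_orth {R : realType} {X : normedModType R} (delta : R) (x y : X) : Prop :=
  forall l : R, `|x + l *: y| ^+ 2 >= `|x| ^+ 2 - 2 * delta * `|x| * `|l *: y|.

Definition is_dual {R : realType} {X : normedModType R} (f : X -> R) : Prop :=
  (forall (a : R) (u v : X), f (a *: u + v) = a * f u + f v) /\ continuous f.

Definition dnorm {R : realType} {X : normedModType R} (f : X -> R) : R :=
  sup [set `|f z| | z in [set z : X | `|z| <= 1]].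

Definition in_dual_sphere {R : realType} {X : normedModType R} (f : X -> R) : Prop :=
  is_dual f /\ dnorm f = 1.

Definition supp_funcs {R : realType} {X : normedModType R} (x : X) : set (X -> R) :=
  [set f | in_dual_sphere f /\ f x = `|x|].

Definition eps_smooth {R : realType} {X : normedModType R} (eps : R) (x : X) : Prop :=
  forall f g, supp_funcs x f -> supp_funcs x g -> dnorm (fun z => f z - g z) <= eps.

(* By Hahn-Banach, x _|_B^eps y holds iff some f in J(x) has |f y| <= eps ||y||:
   the quadratic condition defining x _|_B^eps y linearizes, by convexity of
   t |-> ||x + t y||, to a ||x|| - eps ||y|| <= ||a x + y||, which is exactly
   what is needed to extend a x |-> a ||x|| to span {x, y} with |f y| <= eps ||y||.
   Take such f1, f2 for y1, y2.  By eps-smoothness ||f1 - f2|| <= eps, so if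
   ||y2|| <= ||y1||, then |f1 (y1 + y2)| <= eps ||y1|| + 2 eps ||y2||
   <= 3/2 eps (||y1|| + ||y2||) < ||y1 + y2||, and f1 witnesses
   x _|_B^eps1 (y1 + y2) with eps1 = |f1 (y1 + y2)| / ||y1 + y2|| < 1. *)

From HB Require Import structures.
From mathcomp Require Import all_boot all_order all_algebra.
From mathcomp Require Import all_classical all_reals all_analysis.
From mathcomp Require Import ring lra.
Set Implicit Arguments. Unset Strict Implicit. Unset Printing Implicit Defensive.
Import Order.TTheory GRing.Theory Num.Theory.
Import numFieldNormedType.Exports.
Local Open Scope classical_set_scope.
Local Open Scope ring_scope.

Lemma sqr_ge_of_ge_sub (R : realFieldType) (n c N : R) :
  0 <= n -> 0 <= c -> 0 <= N -> n - c <= N -> n ^+ 2 - 2 * (n * c) <= N ^+ 2.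
Proof. by move=> n0 c0 N0; case: (lerP 0 (n - c)) => ?; nra. Qed.

Lemma chain_bigcup_setU_pair (T : Type) (G0 : set T) (F : set (set T)) (u v : T) :
  total_on F subset ->
  ((\bigcup_(B in F) B) `|` G0) u -> ((\bigcup_(B in F) B) `|` G0) v ->
  exists2 B, B = set0 \/ F B & (B `|` G0) u /\ (B `|` G0) v.
Proof.
move=> Ftot.
have in_one w : ((\bigcup_(B in F) B) `|` G0) w ->
    exists2 B, B = set0 \/ F B & (B `|` G0) w.
  by case=> [[B FB Bw]|G0w]; [exists B; [right|left] | exists set0; [left|right]].
move=> /in_one [B1 hB1 B1u] /in_one [B2 hB2 B2v].
have [B12|B21] : B1 `<=` B2 \/ B2 `<=` B1.
  case: hB1 => [->|F1]; first by left.
  by case: hB2 => [->|F2]; [right | exact: Ftot].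
- exists B2 => //; split => //.
  by case: B1u => [/B12|]; [left|right].
- exists B1 => //; split => //.
  by case: B2v => [/B21|]; [left|right].
Qed.

Section HahnBanach.
Variables (R : realType) (X : lmodType R) (p : X -> R).
Hypothesis p_subadd : forall u v, p (u + v) <= p u + p v.
Hypothesis p_homog : forall (t : R) u, 0 < t -> p (t *: u) = t * p u.

(* A linear functional on a subspace of [X], dominated by [p], encoded by its
   graph; the subspace is the domain of the graph. *)
Definition dominated_graph (G : set (X * R)) : Prop :=
  [/\ G (0, 0),
      forall s z a w b, G (z, a) -> G (w, b) -> G (s *: z + w, s * a + b),
      forall z a b, G (z, a) -> G (z, b) -> a = b &
      forall z a, G (z, a) -> a <= p z].

Definition graph_ext (G : set (X * R)) (y : X) (c : R) : set (X * R) :=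
  [set u | exists m a t, G (m, a) /\ u = (m + t *: y, a + t * c)].

Lemma sub_graph_ext G y c : G `<=` graph_ext G y c.
Proof.
by case=> m a Gma; exists m, a, 0; rewrite scale0r mul0r !addr0.
Qed.

Lemma graph_ext_point G y c : G (0, 0) -> graph_ext G y c (y, c).
Proof. by move=> G0; exists 0, 0, 1; rewrite scale1r mul1r !add0r. Qed.

Section DominatedGraph.
Variable G : set (X * R).
Hypothesis domG : dominated_graph G.

Lemma graphZ s m a : G (m, a) -> G (s *: m, s * a).
Proof.
case: domG => G0 GD _ _ Gma.
by rewrite -[s *: m]addr0 -[s * a]addr0; apply: GD.
Qed.

Lemma graphB m a w b : G (m, a) -> G (w, b) -> G (m - w, a - b).
Proof.
case: domG => _ GD _ _ Gma Gwb.
by rewrite addrC [a - b]addrC -(scaleN1r w) -(mulN1r b); apply: GD.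
Qed.

Lemma dominated_graph_gap y m a m' a' : G (m, a) -> G (m', a') ->
  a - p (m - y) <= p (m' + y) - a'.
Proof.
case: domG => _ GD _ Gle Gma Gma'.
have := Gle _ _ (GD 1 _ _ _ _ Gma Gma'); rewrite scale1r mul1r.
have := p_subadd (m - y) (m' + y); rewrite addrACA addNr addr0.
lra.
Qed.

Lemma graph_ext_linear y c : forall s z a w b, graph_ext G y c (z, a) ->
  graph_ext G y c (w, b) -> graph_ext G y c (s *: z + w, s * a + b).
Proof.
case: domG => _ GD _ _ s _ _ _ _ [m [a [t [Gma [-> ->]]]]] [m' [a' [t' [Gma' [-> ->]]]]].
exists (s *: m + m'), (s * a + a'), (s * t + t'); split; first exact: GD.
congr (_, _); last by ring.
by rewrite scalerDr scalerDl scalerA addrACA.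
Qed.

Lemma graph_ext_functional y c : (forall a, ~ G (y, a)) ->
  forall z a b, graph_ext G y c (z, a) -> graph_ext G y c (z, b) -> a = b.
Proof.
case: domG => _ _ Gfun _ ny z b b' [m [a [t [Gma [-> ->]]]]].
move=> [m' [a' [t' [Gma' [Em ->]]]]]; have [tt'|ntt'] := eqVneq t t'.
  by subst t'; move/addIr: Em => Em; subst m'; rewrite (Gfun _ _ _ Gma Gma').
have tt'0 : t - t' != 0 by rewrite subr_eq0.
have Ey : y = (t - t')^-1 *: (m' - m).
  apply: (@scalerI _ _ (t - t')) => //.
  have -> : m' = m + t *: y - t' *: y by rewrite Em addrK.
  by rewrite scalerA mulfV // scale1r scalerBl addrAC [m + _]addrC addrK.
by case: (ny ((t - t')^-1 * (a' - a))); rewrite {1}Ey; apply/graphZ/graphB.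
Qed.

Lemma graph_ext_dominated y c :
  (forall m a, G (m, a) -> a + c <= p (m + y)) ->
  (forall m a, G (m, a) -> a - c <= p (m - y)) ->
  forall z a, graph_ext G y c (z, a) -> a <= p z.
Proof.
case: domG => _ _ _ Gle hc1 hc2 _ _ [m [a [t [Gma [-> ->]]]]].
have [t0|t0|->] := ltrgt0P t; last by rewrite scale0r mul0r !addr0; apply: Gle.
- have -> : m + t *: y = t *: (t^-1 *: m + y).
    by rewrite scalerDr scalerA mulfV ?gt_eqF // scale1r.
  have -> : a + t * c = t * (t^-1 * a + c) by field; rewrite gt_eqF.
  by rewrite p_homog // ler_pM2l //; apply/hc1/graphZ.
- have -> : m + t *: y = (- t) *: ((- t)^-1 *: m - y).
    by rewrite scalerBr scalerA mulfV ?oppr_eq0 ?lt_eqF // scale1r scaleNr opprK.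
  have -> : a + t * c = (- t) * ((- t)^-1 * a - c) by field; rewrite lt_eqF.
  by rewrite p_homog ?oppr_gt0 // ler_pM2l ?oppr_gt0 //; apply/hc2/graphZ.
Qed.

(* The admissible values [c] form the interval
   [[sup (a - p (m - y)), inf (p (m + y) - a)]]; the hypotheses say that
   [[lo, hi]] meets it. *)
Lemma dominated_graph_ext y (lo hi : R) : (forall a, ~ G (y, a)) -> lo <= hi ->
  (forall m a, G (m, a) -> a - p (m - y) <= hi) ->
  (forall m a, G (m, a) -> lo <= p (m + y) - a) ->
  exists2 c, lo <= c <= hi & dominated_graph (graph_ext G y c).
Proof.
move=> ny lohi hi_ub lo_lb; have [G0 _ _ _] := domG.
pose S := [set r | exists m a, G (m, a) /\ r = a - p (m - y)].
have S_hi : ubound S hi by move=> _ [m [a [Gma ->]]]; exact: hi_ub.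
have supS : has_sup S.
  split; last by exists hi.
  by exists (0 - p (0 - y)), 0, 0.
have S_le m a : G (m, a) -> sup S <= p (m + y) - a.
  move=> Gma; apply: ge_sup; first by case: supS.
  by move=> _ [m' [a' [Gma' ->]]]; apply: dominated_graph_gap.
have le_S m a : G (m, a) -> a - p (m - y) <= sup S.
  by move=> Gma; apply: sup_upper_bound => //; exists m, a.
exists (Num.max (sup S) lo).
  by rewrite le_max lexx orbT ge_max lohi andbT ge_sup //; case: supS.
split; first exact/sub_graph_ext.
- exact: graph_ext_linear.
- exact: graph_ext_functional.
apply: graph_ext_dominated => m a Gma.
  by rewrite -lerBrDl ge_max S_le ?lo_lb.
by rewrite lerBlDr -lerBlDl (le_trans (le_S _ _ Gma)) // le_max lexx.
Qed.

End DominatedGraph.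

Lemma dominated_graph_chain G0 (F : set (set (X * R))) : dominated_graph G0 ->
  F `<=` (fun A => dominated_graph (A `|` G0)) -> total_on F subset ->
  dominated_graph ((\bigcup_(B in F) B) `|` G0).
Proof.
move=> domG0 FP Ftot; set U := _ `|` G0.
have common u v : U u -> U v ->
    exists2 K, dominated_graph K & [/\ K `<=` U, K u & K v].
  move=> Uu Uv; have [B hB [Bu Bv]] := chain_bigcup_setU_pair Ftot Uu Uv.
  exists (B `|` G0); last split => //.
    by case: hB => [->|/FP //]; rewrite set0U.
  by move=> w [Bw|G0w]; [case: hB Bw => [->//|FB Bw]; left; exists B | right].
split.
- by right; case: domG0.
- move=> s z a w b Uz Uw; have [K [_ KD _ _] [KU Kz Kw]] := common _ _ Uz Uw.
  exact/KU/KD.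
- move=> z a b Uz Uz'; have [K [_ _ Kfun _] [_ Kz Kz']] := common _ _ Uz Uz'.
  exact: Kfun Kz Kz'.
- move=> z a Uz; have [K [_ _ _ Kle] [_ Kz _]] := common _ _ Uz Uz.
  exact: Kle Kz.
Qed.

Lemma dominated_graph_maximal_total G : dominated_graph G ->
  (forall B, G `<` B -> ~ dominated_graph B) -> forall y, exists a, G (y, a).
Proof.
move=> domG maxG y; apply: contrapT => /forallNP ny; have [G0 _ _ _] := domG.
have gap := dominated_graph_gap domG y.
have [c _ domGc] := dominated_graph_ext domG ny (gap _ _ _ _ G0 G0)
  (fun m a Gma => gap _ _ _ _ Gma G0) (fun m a Gma => gap _ _ _ _ G0 Gma).
apply: (maxG _ _ domGc); split; first exact: sub_graph_ext.
by move=> /(_ _ (graph_ext_point y c G0)); apply: ny.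
Qed.

Theorem hahn_banach G0 : dominated_graph G0 -> exists F : X -> R,
  [/\ scalar F, forall z, F z <= p z & forall z a, G0 (z, a) -> F z = a].
Proof.
(* Zorn is applied to the [A] with [A `|` G0] dominated, so that the empty
   chain needs no special treatment. *)
move=> domG0; have [A [domA maxA]] := Zorn_bigcup
  (fun F FP Ftot => @dominated_graph_chain G0 F domG0 FP Ftot).
have maxAG0 B : A `|` G0 `<` B -> ~ dominated_graph B.
  move=> [AB BA] domB; have G0B : G0 `<=` B by move=> z G0z; apply: AB; right.
  apply: (maxA B); last by rewrite (setUidl G0B).
  by split=> [z Az|BA']; [apply: AB; left | apply: BA => z /BA'; left].
have [F AF] := choice (dominated_graph_maximal_total domA maxAG0).
have [_ AD Afun Ale] := domA.
exists F; split.
- by move=> a u v; apply: Afun (AF _) _; apply: AD.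
- by move=> z; apply: Ale (AF z).
- by move=> z a G0z; apply: Afun (AF z) _; right.
Qed.

End HahnBanach.

Definition dual_ball_image (R : realType) (X : normedModType R) (f : X -> R) : set R :=
  [set `|f z| | z in [set z : X | `|z| <= 1]].

Section DualNorm.
Variables (R : realType) (X : normedModType R).
Implicit Types (f : X -> R) (K : R).

Lemma dual_ball_image_ubound f K : 0 <= K -> (forall z, `|f z| <= K * `|z|) ->
  ubound (dual_ball_image f) K.
Proof.
by move=> K0 fK _ [z /= z1 <-]; rewrite (le_trans (fK z)) // ler_piMr.
Qed.

Lemma has_sup_dual_ball_image f K : 0 <= K -> (forall z, `|f z| <= K * `|z|) ->
  has_sup (dual_ball_image f).
Proof.
move=> K0 fK; split; last by exists K; apply: dual_ball_image_ubound.
by exists `|f 0|, 0 => //=; rewrite normr0.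
Qed.

Lemma dnorm_le f K : 0 <= K -> (forall z, `|f z| <= K * `|z|) -> dnorm f <= K.
Proof.
move=> K0 fK; apply: ge_sup; last exact: dual_ball_image_ubound.
by case: (has_sup_dual_ball_image K0 fK).
Qed.

Lemma has_sup_dnorm1 f : dnorm f = 1 -> has_sup (dual_ball_image f).
Proof.
move=> f1; apply: contrapT => nsup; move: f1.
by rewrite /dnorm sup_out // => /eqP; rewrite eq_sym oner_eq0.
Qed.

End DualNorm.

Section ScalarFunctional.
Variables (R : realType) (X : normedModType R) (f : X -> R).
Hypothesis f_scalar : scalar f.
#[local] HB.instance Definition _ := GRing.isLinear.Build R X R *%R f f_scalar.

Lemma le_dnorm : has_sup (dual_ball_image f) -> forall z, `|f z| <= dnorm f * `|z|.
Proof.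
move=> fsup z; have [->|z0] := eqVneq z 0; first by rewrite linear0 !normr0 mulr0.
have z_gt0 : 0 < `|z| by rewrite normr_gt0.
have unit_z : dual_ball_image f `|f (`|z|^-1 *: z)|.
  by exists (`|z|^-1 *: z) => //=; rewrite normrZ gtr0_norm ?invr_gt0 // mulVf ?gt_eqF.
have := sup_upper_bound fsup unit_z.
by rewrite linearZ /= normrM gtr0_norm ?invr_gt0 // -ler_pdivrMr // mulrC.
Qed.

Lemma bounded_scalar_continuous K : (forall z, `|f z| <= K * `|z|) -> continuous f.
Proof.
move=> fK z; apply/cvgrPdist_lt => e e0.
have K1 : 0 < `|K| + 1 by have := normr_ge0 K; lra.
apply/nbhs_ballP; exists (e / (`|K| + 1)) => /= [|u]; first by rewrite divr_gt0.
rewrite -ball_normE /= -linearB => zu; apply: le_lt_trans (fK _) _.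
rewrite ltr_pdivlMr // in zu; apply: le_lt_trans zu.
by rewrite mulrC ler_wpM2l // (le_trans (ler_norm K)) // lerDl.
Qed.

Lemma norm_le_of_le_norm : (forall z, f z <= `|z|) -> forall z, `|f z| <= `|z|.
Proof.
by move=> fle z; rewrite ler_norml fle andbT lerNl -linearN -normrN fle.
Qed.

Lemma supp_funcs_of_norming (x : X) : x != 0 -> (forall z, f z <= `|z|) -> f x = `|x| ->
  supp_funcs x f.
Proof.
move=> x0 fle fx; have f1 z : `|f z| <= 1 * `|z| by rewrite mul1r norm_le_of_le_norm.
split=> //; split; first by split=> //; exact: bounded_scalar_continuous f1.
apply/eqP; rewrite eq_le dnorm_le //=.
have := le_dnorm (has_sup_dual_ball_image ler01 f1) x.
by rewrite fx ger0_norm ?normr_ge0 // -{1}[`|x|]mul1r ler_pM2r // normr_gt0.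
Qed.

Lemma bj_orth_of_norming (x y : X) e1 : (forall z, f z <= `|z|) -> f x = `|x| ->
  0 <= e1 -> `|f y| <= e1 * `|y| -> bj_orth e1 x y.
Proof.
move=> fle fx e0 fy l; rewrite normrZ.
have : `|x| - e1 * (`|l| * `|y|) <= `|x + l *: y|.
  apply: le_trans _ (fle _).
  rewrite [x + _]addrC f_scalar fx [_ + `|x|]addrC lerD2l.
  have : `|l * f y| <= e1 * (`|l| * `|y|) by rewrite normrM mulrCA ler_wpM2l ?normr_ge0.
  by rewrite ler_norml => /andP[].
have -> : 2 * e1 * `|x| * (`|l| * `|y|) = 2 * (`|x| * (e1 * (`|l| * `|y|))) by ring.
by apply: sqr_ge_of_ge_sub; rewrite ?mulr_ge0.
Qed.

End ScalarFunctional.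

Section ApproximateOrthogonality.
Variables (R : realType) (X : normedModType R).

Lemma norm_le_chord (x y : X) (s t : R) : 0 <= s -> s <= t -> 0 < t ->
  `|x + s *: y| <= s / t * `|x + t *: y| + (1 - s / t) * `|x|.
Proof.
move=> s0 st t0.
have st0 : 0 <= s / t by rewrite divr_ge0 // ltW.
have st1 : 0 <= 1 - s / t by rewrite subr_ge0 ler_pdivrMr // mul1r.
have -> : x + s *: y = s / t *: (x + t *: y) + (1 - s / t) *: x.
  rewrite scalerDr scalerA divfK ?gt_eqF // scalerBl scale1r.
  by rewrite addrAC [_ *: x + (x - _)]addrC subrK.
apply: le_trans (ler_normD _ _) _.
by rewrite [X in X + _]normrZ [X in _ + X]normrZ (ger0_norm st0) (ger0_norm st1).
Qed.

(* Convexity of [t |-> `|x + t *: y|] turns the quadratic inequality of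
   [bj_orth] at small [t] into a linear one valid for every [t > 0]. *)
Lemma bj_orth_lower_linear eps (x y : X) : x != 0 -> 0 <= eps -> bj_orth eps x y ->
  forall t, 0 < t -> `|x| - eps * t * `|y| <= `|x + t *: y|.
Proof.
move=> x0 e0 xy t t0; set n := `|x|; set m := `|y|; set N := `|x + t *: y|.
rewrite leNgt; apply/negP => lt_xt.
have n0 : 0 < n by rewrite normr_gt0.
have m0 : 0 <= m by rewrite normr_ge0.
pose k := (n - N) / t.
have Nk : N = n - t * k by rewrite /k mulrC divfK ?gt_eqF //; ring.
have km : eps * m < k by rewrite /k ltr_pdivlMr // mulrAC; lra.
pose d := n * (k - eps * m).
have d0 : 0 < d by rewrite mulr_gt0 // subr_gt0.
have k2 : 0 < k ^+ 2 by rewrite exprn_gt0 // (le_lt_trans (mulr_ge0 e0 m0) km).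
pose s := Num.min t (d / k ^+ 2).
have s0 : 0 < s by rewrite lt_min t0 divr_gt0.
have sk : s * k ^+ 2 <= d by rewrite -ler_pdivlMr // ge_min lexx orbT.
have xs : `|x + s *: y| <= n - s * k.
  have -> : n - s * k = s / t * N + (1 - s / t) * n by rewrite Nk; field; rewrite gt_eqF.
  by apply: norm_le_chord; rewrite ?ge_min ?lexx // ltW.
have := xy s; rewrite normrZ gtr0_norm // -/n -/m => bj_s.
have : `|x + s *: y| ^+ 2 <= (n - s * k) ^+ 2.
  by rewrite lerXn2r ?nnegrE // (le_trans (normr_ge0 _) xs).
by rewrite /d in sk d0; nra.
Qed.

Lemma bj_orthN eps (x y : X) : bj_orth eps x y -> bj_orth eps x (- y).
Proof. by move=> xy l; rewrite scalerN -scaleNr; apply: xy. Qed.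

Lemma bj_orth_lower eps (x y : X) : x != 0 -> 0 <= eps -> bj_orth eps x y ->
  forall a, a * `|x| - eps * `|y| <= `|a *: x + y|.
Proof.
move=> x0 e0 xy a; have x_gt0 : 0 < `|x| by rewrite normr_gt0.
have [a_le0|a_gt0] := lerP a 0.
  by apply: le_trans (normr_ge0 _); have := mulr_ge0 e0 (normr_ge0 y); nra.
have -> : a *: x + y = a *: (x + a^-1 *: y).
  by rewrite scalerDr scalerA mulfV ?gt_eqF // scale1r.
have -> : a * `|x| - eps * `|y| = a * (`|x| - eps * a^-1 * `|y|) by field; rewrite gt_eqF.
by rewrite normrZ gtr0_norm // ler_pM2l // bj_orth_lower_linear // invr_gt0.
Qed.

Lemma bj_orth_nonparallel eps (x y : X) : x != 0 -> y != 0 -> 0 <= eps -> eps < 1 ->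
  bj_orth eps x y -> forall b, y <> b *: x.
Proof.
move=> x0 y0 e0 e1 xy b yb.
have y_gt0 : 0 < `|y| by rewrite normr_gt0.
have lower_y := bj_orth_lower x0 e0 xy (- b).
have lower_Ny := bj_orth_lower x0 e0 (bj_orthN xy) b.
rewrite {2}yb scaleNr addNr normr0 in lower_y.
rewrite normrN {2}yb subrr normr0 in lower_Ny.
have ny : `|y| = `|b| * `|x| by rewrite yb normrZ.
by case: ger0P ny => _ ny; nra.
Qed.

End ApproximateOrthogonality.

Section SupportFunctionals.
Variables (R : realType) (X : normedModType R).

Lemma supp_funcs_norm_le (x : X) (f : X -> R) : supp_funcs x f ->
  forall z, `|f z| <= `|z|.
Proof.
by move=> [[[fs _] f1] _] z; have := le_dnorm fs (has_sup_dnorm1 f1) z; rewrite f1 mul1r.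
Qed.

Lemma bj_orth_of_supp_funcs (x y : X) (f : X -> R) e1 : supp_funcs x f -> 0 <= e1 ->
  `|f y| <= e1 * `|y| -> bj_orth e1 x y.
Proof.
move=> Jf; have [[[fs _] _] fx] := Jf; apply: (bj_orth_of_norming (f:=f)) fx => // z.
exact: le_trans (ler_norm _) (supp_funcs_norm_le Jf z).
Qed.

Lemma dominated_graph_line (x : X) : x != 0 ->
  dominated_graph (@Num.norm _ X) [set (a *: x, a * `|x|) | a in [set: R]].
Proof.
move=> x0; split.
- by exists 0; rewrite ?scale0r ?mul0r.
- move=> s _ _ _ _ [a _ [<- <-]] [b _ [<- <-]].
  by exists (s * a + b); rewrite // scalerDl scalerA mulrDl mulrA.
- move=> _ _ _ [a _ [<- <-]] [b _ [Eab <-]].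
  move/eqP: Eab; rewrite -subr_eq0 -scalerBl scaler_eq0 (negbTE x0) orbF subr_eq0.
  by move/eqP->.
- by move=> _ _ [a _ [<- <-]]; rewrite normrZ ler_wpM2r ?normr_ge0 // ler_norm.
Qed.

Lemma supp_funcs_of_bj_orth eps (x y : X) : x != 0 -> y != 0 -> 0 <= eps -> eps < 1 ->
  bj_orth eps x y -> exists2 f, supp_funcs x f & `|f y| <= eps * `|y|.
Proof.
move=> x0 y0 e0 e1 xy; have domGx := dominated_graph_line x0.
set Gx := [set _ | _ in _] in domGx.
have ny a : ~ Gx (y, a).
  by case=> b _ [yb _]; apply: (bj_orth_nonparallel x0 y0 e0 e1 xy (esym yb)).
have lohi : - (eps * `|y|) <= eps * `|y| by have := mulr_ge0 e0 (normr_ge0 y); lra.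
have hi_ub m a : Gx (m, a) -> a - `|m - y| <= eps * `|y|.
  by case=> b _ [<- <-]; have := bj_orth_lower x0 e0 (bj_orthN xy) b; rewrite normrN; lra.
have lo_lb m a : Gx (m, a) -> - (eps * `|y|) <= `|m + y| - a.
  by case=> b _ [<- <-]; have := bj_orth_lower x0 e0 xy b; lra.
have norm_homog (t : R) (u : X) : 0 < t -> `|t *: u| = t * `|u|.
  by move=> t0; rewrite normrZ gtr0_norm.
have [c /andP[c_lo c_hi] domGc] :=
  dominated_graph_ext (@ler_normD _ _) norm_homog domGx ny lohi hi_ub lo_lb.
have [F [Fs Fle FG]] := hahn_banach (@ler_normD _ _) norm_homog domGc.
exists F.
  apply: supp_funcs_of_norming => //; apply/FG/sub_graph_ext.
  by exists 1; rewrite ?scale1r ?mul1r.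
have Fy : F y = c by apply/FG/graph_ext_point; case: domGx.
by rewrite Fy ler_norml c_lo c_hi.
Qed.

Lemma eps_smooth_sub_le eps (x : X) (f g : X -> R) : eps_smooth eps x ->
  supp_funcs x f -> supp_funcs x g -> forall z, `|f z - g z| <= eps * `|z|.
Proof.
move=> smooth Jf Jg z; have [[[fs _] _] _] := Jf; have [[[gs _] _] _] := Jg.
have fg_scalar : scalar (fun z => f z - g z) by move=> a u v; rewrite fs gs; ring.
have fg2 w : `|f w - g w| <= 2 * `|w|.
  have := supp_funcs_norm_le Jf w; have := supp_funcs_norm_le Jg w.
  have := ler_normB (f w) (g w); lra.
have fg_sup := has_sup_dual_ball_image (ler0n _ 2) fg2.
by apply: le_trans (le_dnorm fg_scalar fg_sup z) _; rewrite ler_wpM2r // smooth.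
Qed.

Lemma scalar_sum_le (f g : X -> R) eps (y1 y2 : X) : scalar f -> 0 <= eps ->
  (forall z, `|f z - g z| <= eps * `|z|) ->
  `|f y1| <= eps * `|y1| -> `|g y2| <= eps * `|y2| -> `|y2| <= `|y1| ->
  2 * `|f (y1 + y2)| <= 3 * eps * (`|y1| + `|y2|).
Proof.
move=> fs e0 fg fy1 gy2 y21.
have fD : f (y1 + y2) = f y1 + f y2 by have := fs 1 y1 y2; rewrite scale1r mul1r.
have := ler_normD (f y2 - g y2) (g y2); rewrite subrK => fy2.
have := fg y2; have := ler_normD (f y1) (f y2).
have : 0 <= eps * (`|y1| - `|y2|) by rewrite mulr_ge0 // subr_ge0.
rewrite fD mulrBr; lra.
Qed.

End SupportFunctionals.

Theorem theorem4p2 (R : realType) (X : normedModType R) (x y1 y2 : X) (eps : R) :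
  x != 0 -> y1 != 0 -> y2 != 0 ->
  0 <= eps -> eps < 1 ->
  eps < 2 * `|y1 + y2| / (3 * (`|y1| + `|y2|)) ->
  2 * `|y1 + y2| / (3 * (`|y1| + `|y2|)) < 1 ->
  bj_orth eps x y1 -> bj_orth eps x y2 ->
  eps_smooth eps x ->
  exists eps1 : R, 0 <= eps1 /\ eps1 < 1 /\ bj_orth eps1 x (y1 + y2).
Proof.
move=> x0 y10 y20 e0 e1 eps_lt _ xy1 xy2 smooth.
have [f1 Jf1 f1y1] := supp_funcs_of_bj_orth x0 y10 e0 e1 xy1.
have [f2 Jf2 f2y2] := supp_funcs_of_bj_orth x0 y20 e0 e1 xy2.
have f12 := eps_smooth_sub_le smooth Jf1 Jf2.
have [f Jf f_sum] : exists2 f, supp_funcs x f &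
    2 * `|f (y1 + y2)| <= 3 * eps * (`|y1| + `|y2|).
  have [[[f1s _] _] _] := Jf1; have [[[f2s _] _] _] := Jf2.
  have [y21|y12] := lerP `|y2| `|y1|; [exists f1 | exists f2] => //.
    exact: scalar_sum_le f12 f1y1 f2y2 y21.
  rewrite addrC [`|y1| + _]addrC; apply: scalar_sum_le e0 _ f2y2 f1y1 (ltW y12) => //.
  by move=> z; rewrite distrC.
have y_pos : 0 < 3 * (`|y1| + `|y2|) by rewrite mulr_gt0 // addr_gt0 ?normr_gt0.
rewrite ltr_pdivlMr // in eps_lt.
have N_gt0 : 0 < `|y1 + y2| by have := mulr_ge0 e0 (ltW y_pos); lra.
exists (`|f (y1 + y2)| / `|y1 + y2|); split; first by rewrite divr_ge0.
split; first by rewrite ltr_pdivrMr // mul1r; lra.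
by apply: bj_orth_of_supp_funcs Jf _ _; rewrite ?divr_ge0 ?divfK ?gt_eqF.
Qed.
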